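(* If $f_N\in H_N^{\mathrm{sip}}$ converges weakly to $f\in H^{\mathrm{sbm}}$ with respect to the Hilbert space convergence $H_N^{\mathrm{sip}}\to H^{\mathrm{sbm}}$, then $f_N$ (viewed as an element of $H_N^{\mathrm{rw}}$) also converges weakly to $f$ (viewed as an element of $H^{\mathrm{bm}}$, i.e. its Lebesgue a.e. class) with respect to the Hilbert space convergence $H_N^{\mathrm{rw}}\to H^{\mathrm{bm}}$.
   Context: $\gamma>0$; $\mu_N$ gives mass $\frac1N$ to each point of $\frac1N\mathbb Z$; $\nu_{\gamma,N}=\mu_N+\sqrt2\gamma\delta_0$. $H_N^{\mathrm{rw}}=L^2(\frac1N\mathbb Z,\mu_N)$, $H^{\mathrm{bm}}=L^2(\mathbb R,dx)$, Hilbert convergence witnessed by $C^{\mathrm{rw}}=C_c^\infty(\mathbb R)$ and $\Phi_Nf=f|_{\frac1N\mathbb Z}$. $H_N^{\mathrm{sip}}=L^2(\frac1N\mathbb Z,\nu_{\gamma,N})$, $H^{\mathrm{sbm}}=L^2(\mathbb R,dx+\sqrt2\gamma\delta_0)$, Hilbert convergence witnessed by $C^{\mathrm{sip}}=\{f+\lambda\mathbf 1_{\{0\}}:f\in C_c^\infty(\mathbb R),\lambda\in\mathbb R\}$ and $\Phi_Nf=f|_{\frac1N\mathbb Z}$. In either setting: $g_N\in H_N$ converges strongly to $g\in H$ if there exist $\tilde g_M$ in the respective $C$ with $\|\tilde g_M-g\|_H\to0$ and $\lim_M\limsup_N\|\Phi_N\tilde g_M-g_N\|_{H_N}=0$; $f_N$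 converges weakly to $f$ if $\langle f_N,g_N\rangle_{H_N}\to\langle f,g\rangle_H$ for every sequence $g_N$ converging strongly to $g$. *)

From HB Require Import structures.
From mathcomp Require Import all_boot all_order all_algebra.
From mathcomp Require Import all_classical all_reals all_analysis.
Set Implicit Arguments. Unset Strict Implicit. Unset Printing Implicit Defensive.
Import Order.TTheory GRing.Theory Num.Theory.
Import numFieldNormedType.Exports.
Local Open Scope classical_set_scope.
Local Open Scope ring_scope.

(* Convention: the scaling index N >= 1 of the paper is encoded as n : nat with
   N = n.+1.  A function on (1/N)Z is encoded as u : int -> R, u k = value at k/N. *)
Section Defs.
Variable R : realType.

Definition latN (n : nat) : R := (n.+1)%:R.
Definition latpt (n : nat) (k : int) : R := k%:~R / latN n.

Definition zsum (a : int -> R) : R :=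
  limn (series (fun k => a (Posz k) + a (Negz k))).
Definition zsummable (a : int -> R) : Prop :=
  cvgn (series (fun k => `|a (Posz k)| + `|a (Negz k)|)).

Definition in_Hrw (n : nat) (u : int -> R) : Prop :=
  zsummable (fun k => (latN n)^-1 * u k ^+ 2).
Definition dot_rw (n : nat) (u v : int -> R) : R :=
  zsum (fun k => (latN n)^-1 * (u k * v k)).
Definition norm_rw (n : nat) (u : int -> R) : R := Num.sqrt (dot_rw n u u).

(* H_N^sip = L^2((1/N)Z, nu_{gamma,N}), nu = mu_N + sqrt2 gamma delta_0 *)
Definition in_Hsip (gamma : R) (n : nat) (u : int -> R) : Prop :=
  zsummable (fun k => (latN n)^-1 * u k ^+ 2) /\
  (* the atom contributes the finite quantity sqrt2 gamma u(0)^2 *) True.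
Definition dot_sip (gamma : R) (n : nat) (u v : int -> R) : R :=
  dot_rw n u v + Num.sqrt 2 * gamma * (u 0 * v 0).
Definition norm_sip (gamma : R) (n : nat) (u : int -> R) : R :=
  Num.sqrt (dot_sip gamma n u u).

Definition in_Hbm (f : R -> R) : Prop :=
  measurable_fun setT f /\
  (lebesgue_measure).-integrable setT (fun x => (f x ^+ 2)%:E).
Definition dot_bm (f g : R -> R) : R :=
  Rintegral lebesgue_measure setT (fun x => f x * g x).
Definition norm_bm (f : R -> R) : R := Num.sqrt (dot_bm f f).

(* H^sbm = L^2(R, dx + sqrt2 gamma delta_0) *)
Definition in_Hsbm (gamma : R) (f : R -> R) : Prop :=
  in_Hbm f /\ (* the atom contributes the finite quantity sqrt2 gamma f(0)^2 *) True.
Definition dot_sbm (gamma : R) (f g : R -> R) : R :=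
  dot_bm f g + Num.sqrt 2 * gamma * (f 0 * g 0).
Definition norm_sbm (gamma : R) (f : R -> R) : R :=
  Num.sqrt (dot_sbm gamma f f).

Definition Phi (n : nat) (f : R -> R) : int -> R := fun k => f (latpt n k).

Definition smooth (f : R -> R) : Prop :=
  forall (m : nat) (x : R), derivable (derive1n m f) x 1.
Definition compact_support (f : R -> R) : Prop :=
  exists M : R, forall x : R, M < `|x| -> f x = 0.
Definition Ccinf (f : R -> R) : Prop := smooth f /\ compact_support f.

Definition C_rw (f : R -> R) : Prop := Ccinf f.
Definition C_sip (f : R -> R) : Prop :=
  exists (phi : R -> R) (lam : R), Ccinf phi /\
    f = (fun x => phi x + (if x == 0 then lam else 0)).

Definition strong_rw (gN : nat -> int -> R) (g : R -> R) : Prop :=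
  (forall n, in_Hrw n (gN n)) /\ in_Hbm g /\
  exists gt : nat -> R -> R, (forall M, C_rw (gt M)) /\
    (norm_bm (gt M \- g) @[M --> \oo] --> (0 : R)) /\
    ((fun M => limn_esup (fun n => (norm_rw n (Phi n (gt M) \- gN n))%:E))
        @ \oo --> 0%E).

Definition strong_sip (gamma : R) (gN : nat -> int -> R) (g : R -> R) : Prop :=
  (forall n, in_Hsip gamma n (gN n)) /\ in_Hsbm gamma g /\
  exists gt : nat -> R -> R, (forall M, C_sip (gt M)) /\
    (norm_sbm gamma (gt M \- g) @[M --> \oo] --> (0 : R)) /\
    ((fun M => limn_esup (fun n => (norm_sip gamma n (Phi n (gt M) \- gN n))%:E))
        @ \oo --> 0%E).

Definition weak_rw (fN : nat -> int -> R) (f : R -> R) : Prop :=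
  (forall n, in_Hrw n (fN n)) /\ in_Hbm f /\
  forall (gN : nat -> int -> R) (g : R -> R), strong_rw gN g ->
    dot_rw n (fN n) (gN n) @[n --> \oo] --> dot_bm f g.

Definition weak_sip (gamma : R) (fN : nat -> int -> R) (f : R -> R) : Prop :=
  (forall n, in_Hsip gamma n (fN n)) /\ in_Hsbm gamma f /\
  forall (gN : nat -> int -> R) (g : R -> R), strong_sip gamma gN g ->
    dot_sip gamma n (fN n) (gN n) @[n --> \oo] --> dot_sbm gamma f g.

End Defs.

(* Testing the weak convergence in H^sip against the constant sequence given by
   the point mass at 0 shows f_N(0) -> f(0); this uses the atom sqrt2 gamma > 0.
   If g_N -> g strongly in the random-walk sense, then the atom g_N(0)/N tends to
   0, and g_N with its value at 0 replaced by 0 converges strongly in the sip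
   sense to g with its value at 0 replaced by 0, which is the same element of
   L^2(dx).  Hence
     <f_N, g_N>_rw = <f_N, g_N without 0>_sip + f_N(0) g_N(0)/N -> <f, g>_bm. *)

From mathcomp Require Import all_boot all_order all_algebra.
From mathcomp Require Import all_classical all_reals all_analysis.
From mathcomp Require Import measurable_realfun ring lra.
Set Implicit Arguments. Unset Strict Implicit. Unset Printing Implicit Defensive.
Import Order.TTheory GRing.Theory Num.Theory.
Import numFieldNormedType.Exports.
Local Open Scope classical_set_scope.
Local Open Scope ring_scope.

Section PointMass.
Variables (R : realType) (T : zmodType).
Implicit Types (u v : T -> R) (c : R).

Definition delta0 c : T -> R := fun x => if x == 0 then c else 0.

Definition drop0 u : T -> R := u \+ delta0 (- u 0).

Lemma drop0E u x : drop0 u x = if x == 0 then 0 else u x.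
Proof. by rewrite /drop0 /delta0 /=; case: eqP => [->|]; rewrite ?subrr ?addr0. Qed.

Lemma drop0_at0 u : drop0 u 0 = 0.
Proof. by rewrite drop0E eqxx. Qed.

Lemma drop0B u v : drop0 (u \- v) = drop0 u \- drop0 v.
Proof. by apply/funext => x; rewrite /= !drop0E; case: ifP; rewrite ?subr0. Qed.

End PointMass.

Section ZSums.
Variable R : realType.
Implicit Types (a b : int -> R) (c : R).

Lemma zsummable_le a b : zsummable a -> (forall k, `|b k| <= `|a k|) ->
  zsummable b.
Proof.
by move=> ha hba; apply: (series_le_cvg _ _ _ ha) => k; rewrite ?lerD.
Qed.

Lemma zsummableD a b : zsummable a -> zsummable b -> zsummable (fun k => a k + b k).
Proof.
move=> ha hb; have hab : zsummable (fun k => `|a k| + `|b k|).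
  rewrite /zsummable in ha hb *; set sa := (fun k : nat => _ + _) in ha.
  set sb := (fun k : nat => _ + _) in hb.
  have -> : (fun k : nat => `| `|a k| + `|b k| | + `| `|a (Negz k)| + `|b (Negz k)| |)
      = sa + sb.
    apply/funext => k; rewrite /sa /sb /=.
    by rewrite !(@ger0_norm _ (_ + _)) ?addr_ge0 // addrACA.
  exact: is_cvg_seriesD.
apply: (zsummable_le hab) => k.
by rewrite [X in _ <= X]ger0_norm ?addr_ge0 // ler_normD.
Qed.

Lemma zsummableZ c a : zsummable a -> zsummable (fun k => c * a k).
Proof.
move=> ha; rewrite /zsummable in ha *; set sa := (fun k : nat => _ + _) in ha.
have -> : (fun k : nat => `|c * a k| + `|c * a (Negz k)|) = `|c| *: sa.
  by apply/funext => k; rewrite /sa /= !normrM -mulrDr.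
exact: is_cvg_seriesZ.
Qed.

Lemma zsummable_cvg a : zsummable a ->
  cvgn (series (fun k => a (Posz k) + a (Negz k))).
Proof.
move=> ha; apply: normed_cvg; apply: (series_le_cvg _ _ _ ha) => k /=.
- exact: normr_ge0.
- by rewrite addr_ge0.
- exact: ler_normD.
Qed.

Lemma zsumD a b : zsummable a -> zsummable b ->
  zsum (fun k => a k + b k) = zsum a + zsum b.
Proof.
move=> ha hb; rewrite /zsum -lim_seriesD;
  [|exact: zsummable_cvg ha|exact: zsummable_cvg hb].
by congr (limn (series _)); apply/funext => k; rewrite /= addrACA.
Qed.

Lemma zsummable_fin a K :
  (forall k : nat, (K <= k)%N -> a (Posz k) = 0 /\ a (Negz k) = 0) ->
  zsummable a.
Proof.
move=> aK; rewrite /zsummable; set s := series _.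
apply: (@is_cvg_near_cst _ _ (s K)).
exists K => // m /= Km; rewrite /s /series /=.
rewrite (@big_cat_nat _ _ _ K 0 m _ _ (leq0n K) Km) /=.
rewrite [X in _ + X]big_nat_cond [X in _ + X]big1 ?addr0 // => k /andP[/andP[Kk _] _].
by have [-> ->] := aK k Kk; rewrite normr0 addr0.
Qed.

Lemma zsummable_delta0 c : zsummable (delta0 c).
Proof. by apply: (zsummable_fin (K := 1)) => -[|k]. Qed.

Lemma zsum_delta0 c : zsum (delta0 c) = c.
Proof.
rewrite /zsum; apply/cvg_lim => //; apply: cvg_near_cst; exists 1%N => // -[|n] //= _.
rewrite /series /= big_nat_recl //= big1 => [|k _]; last by rewrite /delta0 addr0.
by rewrite /delta0 /= !addr0.
Qed.

Lemma zsum_ge_at0 a : zsummable a -> (forall k, 0 <= a k) -> a 0 <= zsum a.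
Proof.
move=> ha a_ge0; rewrite /zsum.
have nd_series : nondecreasing_seq (series (fun k => a (Posz k) + a (Negz k))).
  by apply: nondecreasing_series => k _ _; rewrite addr_ge0.
apply: le_trans (nondecreasing_cvgn_le nd_series (zsummable_cvg ha) 1%N).
by rewrite /series /= big_nat1 lerDl.
Qed.

Lemma zsumD_delta0 a b c : zsummable a -> (forall k, b k = a k + delta0 c k) ->
  zsum b = zsum a + c.
Proof.
move=> ha eq_b; rewrite -[X in _ + X]zsum_delta0 -zsumD //;
  last exact: zsummable_delta0.
by congr zsum; apply/funext.
Qed.

End ZSums.

Section Lattice.
Variable R : realType.
Implicit Types (n : nat) (u v : int -> R) (f : R -> R) (c gamma : R).

Lemma latN_gt0 n : 0 < latN R n.
Proof. exact: ltr0Sn. Qed.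

Lemma inv_latN_ge0 n : 0 <= (latN R n)^-1.
Proof. by rewrite invr_ge0 ltW ?latN_gt0. Qed.

Lemma cvg_inv_latN : (latN R n)^-1 @[n --> \oo] --> 0.
Proof. exact: cvg_harmonic. Qed.

Lemma latpt_eq0 n k : (latpt R n k == 0) = (k == 0).
Proof. by rewrite /latpt mulf_eq0 invr_eq0 intr_eq0 (gt_eqF (latN_gt0 n)) orbF. Qed.

Lemma Phi_at0 n f : Phi n f 0 = f 0.
Proof. by rewrite /Phi /latpt mul0r. Qed.

Lemma Phi_delta0 n c : Phi n (delta0 c) = delta0 c.
Proof. by apply/funext => k; rewrite /Phi /delta0 latpt_eq0. Qed.

Lemma Phi_drop0 n f : Phi n (drop0 f) = drop0 (Phi n f).
Proof. by apply/funext => k; rewrite /Phi !drop0E latpt_eq0. Qed.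

Lemma in_Hrw_Phi n f : compact_support f -> in_Hrw n (Phi n f).
Proof.
case=> M fM; pose K := (Num.truncn (`|M| * latN R n)).+1.
apply: (zsummable_fin (K := K)) => k Kk.
have M_lt : M < k%:R / latN R n.
  have MN : M * latN R n <= `|M| * latN R n.
    by rewrite ler_wpM2r ?ler_norm // ltW ?latN_gt0.
  rewrite ltr_pdivlMr ?latN_gt0 //; apply: le_lt_trans MN _.
  by rewrite -truncn_lt_nat // mulr_ge0 // ltW // latN_gt0.
have kN_ge0 : 0 <= k%:R / latN R n :> R by rewrite divr_ge0 // ltW ?latN_gt0.
rewrite /Phi /latpt !fM ?expr0n ?mulr0 //.
- rewrite NegzE intrN mulNr normrN ger0_norm ?divr_ge0 ?ltW ?latN_gt0 //.
  by rewrite (lt_le_trans M_lt) // ler_pM2r ?invr_gt0 ?latN_gt0 // ler_nat.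
- by rewrite ger0_norm.
Qed.

Lemma in_Hrw_prod n u v : in_Hrw n u -> in_Hrw n v ->
  zsummable (fun k => (latN R n)^-1 * (u k * v k)).
Proof.
move=> hu hv; apply: (zsummable_le (zsummableD hu hv)) => k.
rewrite -mulrDr !normrM ler_wpM2l // [X in _ <= X]ger0_norm ?addr_ge0 ?sqr_ge0 //.
by rewrite -normrM ler_norml; apply/andP; split; nra.
Qed.

Lemma in_Hrw_sub n u v : in_Hrw n u -> in_Hrw n v -> in_Hrw n (u \- v).
Proof.
move=> hu hv; rewrite /in_Hrw.
have := zsummableD (zsummableZ (c := 2) hu) (zsummableZ (c := 2) hv).
move=> /zsummable_le; apply=> k.
have sq_ge0 w : 0 <= (latN R n)^-1 * w ^+ 2 by rewrite mulr_ge0 ?inv_latN_ge0 ?sqr_ge0.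
have := sq_ge0 (u k); have := sq_ge0 (v k); have := sq_ge0 (u k + v k).
rewrite /= (ger0_norm (sq_ge0 _)); set c := (latN R n)^-1 => ? ? ?.
rewrite ger0_norm; lra.
Qed.

Lemma in_Hrw_drop0 n v : in_Hrw n v -> in_Hrw n (drop0 v).
Proof.
move=> hv; rewrite /in_Hrw; apply: (zsummable_le hv) => k.
by rewrite drop0E; case: ifP; rewrite ?expr0n ?mulr0 ?normr0.
Qed.

Lemma dot_rw_delta0r n u c : dot_rw n u (delta0 c) = (latN R n)^-1 * (u 0 * c).
Proof.
rewrite /dot_rw -[RHS]zsum_delta0; congr zsum; apply/funext => k.
by rewrite /delta0; case: eqP => [->|]; rewrite ?mulr0.
Qed.

Lemma dot_rw_drop0r n u v : in_Hrw n u -> in_Hrw n v ->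
  dot_rw n u (drop0 v) = dot_rw n u v - (latN R n)^-1 * (u 0 * v 0).
Proof.
move=> hu hv; apply: zsumD_delta0 (in_Hrw_prod hu hv) _ => k.
by rewrite drop0E /delta0; case: eqP => [->|_]; rewrite ?addr0 //; ring.
Qed.

Lemma dot_rw_drop0 n v : in_Hrw n v ->
  dot_rw n (drop0 v) (drop0 v) = dot_rw n v v - (latN R n)^-1 * v 0 ^+ 2.
Proof.
move=> hv; apply: zsumD_delta0 (in_Hrw_prod hv hv) _ => k.
by rewrite drop0E /delta0; case: eqP => [->|_]; rewrite ?addr0 //; ring.
Qed.

Lemma dot_rw_ge_at0 n v : in_Hrw n v -> (latN R n)^-1 * v 0 ^+ 2 <= dot_rw n v v.
Proof.
move=> hv; rewrite expr2; apply: zsum_ge_at0 (in_Hrw_prod hv hv) _ => k.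
by rewrite mulr_ge0 ?inv_latN_ge0 // -expr2 sqr_ge0.
Qed.

Lemma norm_rw_ge_at0 n v : in_Hrw n v ->
  (latN R n)^-1 * `|v 0| <= Num.sqrt (latN R n)^-1 * norm_rw n v.
Proof.
move=> hv; rewrite /norm_rw -sqrtrM ?inv_latN_ge0 //.
have -> : (latN R n)^-1 * `|v 0| = Num.sqrt (((latN R n)^-1 * v 0) ^+ 2).
  by rewrite sqrtr_sqr normrM ger0_norm ?inv_latN_ge0.
by rewrite ler_wsqrtr // exprMn expr2 -mulrA ler_wpM2l ?inv_latN_ge0 ?dot_rw_ge_at0.
Qed.

Lemma norm_sip_drop0_le gamma n v : in_Hrw n v ->
  norm_sip gamma n (drop0 v) <= norm_rw n v.
Proof.
move=> hv; rewrite /norm_sip /dot_sip dot_rw_drop0 // drop0_at0 !mulr0 addr0.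
by rewrite ler_wsqrtr // gerBl mulr_ge0 ?inv_latN_ge0 ?sqr_ge0.
Qed.

Lemma dot_rwE_drop0 gamma n u v : in_Hrw n u -> in_Hrw n v ->
  dot_rw n u v = dot_sip gamma n u (drop0 v) + u 0 * ((latN R n)^-1 * v 0).
Proof.
by move=> hu hv; rewrite /dot_sip dot_rw_drop0r // drop0_at0 !mulr0 addr0; ring.
Qed.

Lemma dot_sip_delta0r gamma n u c :
  dot_sip gamma n u (delta0 c) = ((latN R n)^-1 + Num.sqrt 2 * gamma) * (u 0 * c).
Proof. by rewrite /dot_sip dot_rw_delta0r /delta0 eqxx mulrDl. Qed.

Lemma norm_sip_cst0 gamma n : norm_sip gamma n (cst 0) = 0.
Proof.
have -> : cst 0 = delta0 0 :> (int -> R) by apply/funext => k; rewrite /delta0 if_same.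
by rewrite /norm_sip dot_sip_delta0r !mulr0 sqrtr0.
Qed.

End Lattice.

Section Continuum.
Variable R : realType.
Local Notation mu := (@lebesgue_measure R).
Implicit Types (f g u v : R -> R) (c gamma : R).

Lemma eq_integrable_setD1 (a : R) f g :
  measurable_fun setT f -> measurable_fun setT g -> (forall x, x != a -> f x = g x) ->
  mu.-integrable setT (EFin \o f) -> mu.-integrable setT (EFin \o g).
Proof.
move=> /measurable_EFinP mf /measurable_EFinP mg fg.
have a_null := lebesgue_measure_set1 a.
have null_a h := negligible_integrable (mu := mu) (measurable_set1 a) measurableT h a_null.
move=> /(null_a _ mf) intf; apply/(null_a _ mg).
apply: eq_integrable intf; first exact: measurableD.
by move=> x /set_mem[_ /eqP xa]; rewrite /= fg.
Qed.

Lemma eq_Rintegral_setD1 (a : R) f g : measurable_fun setT f ->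
  (forall x, x != a -> f x = g x) -> Rintegral mu setT f = Rintegral mu setT g.
Proof.
move=> mf fg; have mTa : measurable (setT `\ a) by exact: measurableD.
have mfa : measurable_fun (setT `\ a) f by exact: measurable_funS mf.
have fg_a : {in setT `\ a, f =1 g} by move=> x /set_mem[_ /eqP]; exact: fg.
rewrite /Rintegral -!(integral_setD1 mTa); last 2 first.
- by apply/measurable_EFinP; exact: eq_measurable_fun mfa.
- exact/measurable_EFinP.
by congr fine; apply: eq_integral => x /fg_a ->.
Qed.

Lemma measurable_delta0 c : measurable_fun setT (delta0 c : R -> R).
Proof.
have -> : delta0 c = (fun x => c * \1_[set 0] x) :> (R -> R).
  apply/funext => x; rewrite /delta0 indicE in_set1.
  by case: eqP; rewrite ?mulr1 ?mulr0.
exact/measurable_funM/measurable_indic.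
Qed.

Lemma measurable_drop0 f : measurable_fun setT f -> measurable_fun setT (drop0 f).
Proof. by move=> mf; apply: measurable_funD mf (measurable_delta0 _). Qed.

Lemma Ccinf_measurable f : Ccinf f -> measurable_fun setT f.
Proof.
case=> f_smooth _; apply: continuous_measurable_fun => x.
by apply/differentiable_continuous/derivable1_diffP; have := f_smooth 0%N x.
Qed.

Lemma Ccinf_cst0 : Ccinf (cst 0 : R -> R).
Proof.
split=> [m x|]; last by exists 0.
have -> : derive1n m (cst 0 : R -> R) = cst 0.
  by elim: m => // m IH; rewrite derive1nS IH; apply/funext => y; exact: derive1_cst.
exact: derivable_cst.
Qed.

Lemma in_Hbm_drop0 f : in_Hbm f -> in_Hbm (drop0 f).
Proof.
case=> mf intf; have mdf := measurable_drop0 mf; split => //.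
apply: (eq_integrable_setD1 (a := 0) _ _ _ intf); try exact: measurable_funX.
by move=> x x0; rewrite drop0E (negbTE x0).
Qed.

Lemma in_Hbm_delta0 c : in_Hbm (delta0 c).
Proof.
split; first exact: measurable_delta0.
apply: (eq_integrable_setD1 (a := 0) (f := cst 0)) (integrable0 _ _) => //.
- exact: measurable_funX (measurable_delta0 c).
- by move=> x x0; rewrite /delta0 (negbTE x0) expr0n.
Qed.

Lemma dot_bmC f g : dot_bm f g = dot_bm g f.
Proof. by apply: eq_Rintegral => x _; rewrite mulrC. Qed.

Lemma dot_bm_drop0r u v : measurable_fun setT u -> measurable_fun setT v ->
  dot_bm u (drop0 v) = dot_bm u v.
Proof.
move=> mU mV; symmetry; apply: (eq_Rintegral_setD1 (a := 0)).
  exact: measurable_funM.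
by move=> x x0; rewrite drop0E (negbTE x0).
Qed.

Lemma dot_bm_delta0r u c : dot_bm u (delta0 c) = 0.
Proof.
rewrite /dot_bm -(eq_Rintegral_setD1 (a := 0) (f := cst 0)) ?Rintegral_cst ?mul0r //.
by move=> x x0; rewrite /delta0 (negbTE x0) mulr0.
Qed.

Lemma dot_sbm_drop0r gamma u v : measurable_fun setT u -> measurable_fun setT v ->
  dot_sbm gamma u (drop0 v) = dot_bm u v.
Proof. by move=> mU mV; rewrite /dot_sbm dot_bm_drop0r // drop0_at0 !mulr0 addr0. Qed.

Lemma norm_sbm_drop0 gamma v : measurable_fun setT v ->
  norm_sbm gamma (drop0 v) = norm_bm v.
Proof.
move=> mv; have mdv := measurable_drop0 mv.
by rewrite /norm_sbm dot_sbm_drop0r // dot_bmC dot_bm_drop0r.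
Qed.

Lemma dot_sbm_delta0r gamma u c :
  dot_sbm gamma u (delta0 c) = Num.sqrt 2 * gamma * (u 0 * c).
Proof. by rewrite /dot_sbm dot_bm_delta0r /delta0 eqxx add0r. Qed.

Lemma norm_sbm_cst0 gamma : norm_sbm gamma (cst 0) = 0.
Proof.
have -> : cst 0 = delta0 0 :> (R -> R) by apply/funext => x; rewrite /delta0 if_same.
by rewrite /norm_sbm dot_sbm_delta0r !mulr0 sqrtr0.
Qed.

End Continuum.

Section LimnEsup.
Variable R : realType.
Implicit Types u v : (\bar R)^nat.
Local Open Scope ereal_scope.

Lemma le_limn_esup u v : (forall n, u n <= v n) -> limn_esup u <= limn_esup v.
Proof.
move=> uv; rewrite !limn_esup_lim; apply: lee_lim; try exact: is_cvg_esups.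
apply: nearW => n; apply: ge_ereal_sup => _ [k /= nk <-].
by apply: le_trans (uv k) _; apply: ereal_sup_ubound; exists k.
Qed.

Lemma limn_esup_ge0 u : (forall n, 0 <= u n) -> 0 <= limn_esup u.
Proof. by apply: limf_esup_ge0 => -[N _ /(_ N (leqnn N))]. Qed.

Lemma limn_esup_lt_near u x : limn_esup u < x -> \forall n \near \oo, u n < x.
Proof.
rewrite /limn_esup limf_esupE => /ereal_inf_lt[_ [V oV <-]] supV_lt.
apply: filterS oV => n Vn; apply: le_lt_trans supV_lt.
by apply: ereal_sup_ubound; exists n.
Qed.

End LimnEsup.

Section StrongConvergence.
Variable R : realType.
Implicit Types (gamma c : R) (gN : nat -> int -> R) (g : R -> R).

Lemma strong_sip_delta0 gamma c : strong_sip gamma (fun=> delta0 c) (delta0 c).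
Proof.
split=> [n|]; first split=> //.
  apply: (zsummable_le (zsummable_delta0 (c := (latN R n)^-1 * c ^+ 2))) => k.
  by rewrite /delta0; case: eqP; rewrite ?expr0n ?mulr0.
split; first by split; [exact: in_Hbm_delta0|].
exists (fun=> delta0 c); split.
  move=> M; exists (cst 0), c; split; first exact: Ccinf_cst0.
  by apply/funext => x; rewrite add0r.
have -> : delta0 c \- delta0 c = cst 0 :> (R -> R).
  by apply/funext => x; rewrite /= subrr.
split; first by rewrite norm_sbm_cst0; exact: cvg_cst.
have -> : (fun n => (norm_sip gamma n (Phi n (delta0 c) \- delta0 c))%:E) = cst 0%E.
  apply/funext => n; rewrite Phi_delta0.
  have -> : delta0 c \- delta0 c = cst 0 :> (int -> R).
    by apply/funext => k; rewrite /= subrr.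
  by rewrite norm_sip_cst0.
rewrite (cvg_limn_einf_sup (cvg_cst (0 : \bar R))).2; exact: cvg_cst.
Qed.

Lemma strong_rw_approx gN g e : strong_rw gN g -> 0 < e ->
  exists2 phi, Ccinf phi & \forall n \near \oo, norm_rw n (Phi n phi \- gN n) < e.
Proof.
case=> _ [_ [gt [Cgt [_ gt_gN]]]] e_gt0.
have e_gt0' : (0 < e%:E)%E by rewrite lte_fin.
have [M _ M_lt] := gt_gN _ (open_ereal_lt' e_gt0').
exists (gt M); first exact: Cgt M.
near=> n; rewrite -lte_fin; near: n.
exact: limn_esup_lt_near (M_lt M (leqnn M)).
Unshelve. all: by end_near.
Qed.

Lemma strong_rw_cvg_atom gN g : strong_rw gN g ->
  (latN R n)^-1 * gN n 0 @[n --> \oo] --> 0.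
Proof.
move=> sg; have [phi Cphi near_lt1] := strong_rw_approx sg ltr01.
pose v n := Phi n phi \- gN n.
have hv n : in_Hrw n (v n) := in_Hrw_sub (in_Hrw_Phi Cphi.2) (sg.1 n).
have -> : (fun n => (latN R n)^-1 * gN n 0) =
    (fun n => (latN R n)^-1 * phi 0 - (latN R n)^-1 * v n 0).
  by apply/funext => n; rewrite /v /= Phi_at0; ring.
rewrite -[X in _ --> X]subr0; apply: cvgB.
  rewrite -[X in _ --> X](mul0r (phi 0)).
  by apply: cvgM; [exact: cvg_inv_latN|exact: cvg_cst].
apply: norm_cvg0.
apply: (squeeze_cvgr (f := cst 0) (h := fun n => Num.sqrt (latN R n)^-1)).
- near=> n; have lt1 : norm_rw n (v n) < 1 by near: n.
  rewrite /= normr_ge0 normrM ger0_norm ?inv_latN_ge0 //=.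
  by apply: le_trans (norm_rw_ge_at0 (hv n)) _; rewrite ler_piMr ?sqrtr_ge0 ?ltW.
- exact: cvg_cst.
- rewrite -sqrtr0; apply: continuous_cvg; first exact: sqrt_continuous.
  exact: cvg_inv_latN.
Unshelve. all: by end_near.
Qed.

Lemma strong_rw_drop0 gamma gN g : strong_rw gN g ->
  strong_sip gamma (fun n => drop0 (gN n)) (drop0 g).
Proof.
case=> hgN [hg [gt [Cgt [gt_g gt_gN]]]].
split=> [n|]; first by split=> //; exact: in_Hrw_drop0.
split; first by split=> //; exact: in_Hbm_drop0.
exists (fun M => drop0 (gt M)); split=> [M|].
  by exists (gt M), (- gt M 0); split; [exact: Cgt M|].
split.
  have -> : (fun M => norm_sbm gamma (drop0 (gt M) \- drop0 g)) =
      (fun M => norm_bm (gt M \- g)).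
    apply/funext => M; rewrite -drop0B norm_sbm_drop0 //.
    exact: measurable_funB (Ccinf_measurable (Cgt M)) hg.1.
  exact: gt_g.
apply: squeeze_cvge (cvg_cst 0%E) gt_gN; apply: nearW => M; apply/andP; split.
  by apply: limn_esup_ge0 => n; rewrite lee_fin sqrtr_ge0.
apply: le_limn_esup => n; rewrite lee_fin Phi_drop0 -drop0B.
by apply: norm_sip_drop0_le; apply: in_Hrw_sub (hgN n); exact: in_Hrw_Phi (Cgt M).2.
Qed.

Lemma weak_sip_cvg_at0 gamma fN f : 0 < gamma -> weak_sip gamma fN f ->
  fN n 0 @[n --> \oo] --> f 0.
Proof.
move=> gamma_gt0 [_ [_ fN_f]]; set s := Num.sqrt 2 * gamma.
have s_gt0 : 0 < s by rewrite mulr_gt0 // sqrtr_gt0.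
have w_gt0 n : 0 < (latN R n)^-1 + s by rewrite addr_gt0 // invr_gt0 latN_gt0.
have w_cvg : (latN R n)^-1 + s @[n --> \oo] --> s.
  by rewrite -[s in _ --> s]add0r; apply: cvgD; [exact: cvg_inv_latN|exact: cvg_cst].
have := cvgM (cvgV (lt0r_neq0 s_gt0) w_cvg) (fN_f _ _ (strong_sip_delta0 gamma 1)).
rewrite dot_sbm_delta0r mulr1 mulKf ?lt0r_neq0 // => lim.
have -> : (fun n => fN n 0) =
    (fun n => ((latN R n)^-1 + s)^-1 * dot_sip gamma n (fN n) (delta0 1)).
  by apply/funext => n; rewrite dot_sip_delta0r mulr1 mulKf ?lt0r_neq0 ?w_gt0.
exact: lim.
Qed.

End StrongConvergence.

Theorem proposition5p12 (R : realType) (gamma : R) (hgamma : 0 < gamma)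
  (fN : nat -> int -> R) (f : R -> R) :
  weak_sip gamma fN f -> weak_rw fN f.
Proof.
move=> fN_f; have f0_cvg := weak_sip_cvg_at0 hgamma fN_f.
case: fN_f => hfN [[hf _] fN_f].
split=> [n|]; first exact: (hfN n).1.
split=> // gN g sg.
have := cvgD (fN_f _ _ (strong_rw_drop0 gamma sg))
  (cvgM f0_cvg (strong_rw_cvg_atom sg)).
rewrite dot_sbm_drop0r ?mulr0 ?addr0 => [lim||]; [|exact: hf.1|exact: sg.2.1.1].
have -> : (fun n => dot_rw n (fN n) (gN n)) = (fun n =>
    dot_sip gamma n (fN n) (drop0 (gN n)) + fN n 0 * ((latN R n)^-1 * gN n 0)).
  by apply/funext => n; exact: dot_rwE_drop0 (hfN n).1 (sg.1 n).
exact: lim.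
Qed.
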